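(* Let $N>0$, $R=\mathbb{Q}[x_1,x_2,y_1,y_2]$, and let $t_i,w_i,s_i,u_i$ and $X_\bullet=\{(u_1,u_2),(s_1,s_2)\}$, $X_\circ=\{(w_1,w_2),(t_1,t_2)\}$ be as in the context. Put $$\gamma=\frac{\partial u_1}{\partial y_1}-\frac{\partial u_1}{\partial y_2}-\frac12\frac{\partial u_2}{\partial y_2}(x_2+y_2)+\frac12\frac{\partial u_2}{\partial y_1}(x_1+y_1).$$ Then the partial differential equation $2z+\frac{\partial z}{\partial y_1}(y_1-x_1)+\frac{\partial z}{\partial y_2}(y_2-x_2)=\gamma$ in an unknown $z$ has a unique polynomial solution $\Omega_2(\gamma)\in R$, and the $R$-linear map $\chi_1:X_\bullet\to X_\circ$ defined by $\chi_1(1)=1+\Omega_2(\gamma)\,\theta_1\theta_2$, $\chi_1(\theta_1)=\theta_1+\theta_2$, $\chi_1(\theta_2)=\frac12(x_2+y_2)\theta_1+\frac12(x_1+y_1)\theta_2$, $\chi_1(\theta_1\theta_2)=\frac12(x_1+y_1-x_2-y_2)\theta_1\theta_2$ is a morphism of graded matrix factorisations such that $\pi_\circ\circ\chi_1$ is homotopic to $\mathrm{can}\circ\pi_\bullet$, where $\mathrm{can}:R/(s_1,s_2)\to R/(t_1,t_2)$ is the canonical surjection.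
   Context: Variables have degree $2$. $t_i=y_i-x_i$, $w_i=(y_i^{N+1}-x_i^{N+1})/(y_i-x_i)$, $s_1=y_1+y_2-x_1-x_2$, $s_2=y_1y_2-x_1x_2$, and $u_1,u_2\in R$ are homogeneous with $W:=y_1^{N+1}+y_2^{N+1}-x_1^{N+1}-x_2^{N+1}=u_1s_1+u_2s_2$ and $u_i(y_1,y_2,x_1,x_2)=u_i(x_1,x_2,y_1,y_2)$. For sequences $\boldsymbol a,\boldsymbol b$ of homogeneous elements with $\deg a_i+\deg b_i=2c$ (here $c=N+1$), the cyclic Koszul matrix factorisation $\{\boldsymbol a,\boldsymbol b\}$ of $\sum a_ib_i$ is the exterior algebra $\bigwedge F$ on $F=R\theta_1\oplus R\theta_2$, with $\theta_i$ of $\mathbb{Z}_2$-degree $1$ and internal degree $\deg a_i-c$, and differential $\delta_++\delta_-$ where $\delta_+=(\sum_ib_i\theta_i^* )\lrcorner(-)$ (contraction) and $\delta_-=(\sum_ia_i\theta_i)\wedge(-)$. $\pi_\bullet:X_\bullet\to R/(s_1,s_2)$ and $\pi_\circ:X_\circ\to R/(t_1,t_2)$ are the morphisms of linear factorisations (modules viewed as factorisations of zero) given by projecting onto $\bigwedge^0F=R$ and then onto the quotient. *)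

From HB Require Import structures.
From mathcomp Require Import all_boot all_order all_algebra.
From mathcomp Require Import mpoly.
Set Implicit Arguments. Unset Strict Implicit. Unset Printing Implicit Defensive.
Import Order.TTheory GRing.Theory Num.Theory.
Local Open Scope ring_scope.

Notation R := {mpoly rat[4]}.

Definition x1 : R := 'X_(inord 0).
Definition x2 : R := 'X_(inord 1).
Definition y1 : R := 'X_(inord 2).
Definition y2 : R := 'X_(inord 3).

Definition half : R := ((2 : rat)^-1)%:MP.

Definition dy1 (p : R) : R := mderiv (inord 2) p.
Definition dy2 (p : R) : R := mderiv (inord 3) p.

Definition swapxy (p : R) : R := p \mPo [tuple y1; y2; x1; x2].

Definition t1 : R := y1 - x1.
Definition t2 : R := y2 - x2.
Definition w1 (N : nat) : R := \sum_(k < N.+1) y1 ^+ k * x1 ^+ (N - k).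
  (* = (y1^(N+1) - x1^(N+1)) / (y1 - x1) *)
Definition w2 (N : nat) : R := \sum_(k < N.+1) y2 ^+ k * x2 ^+ (N - k).
Definition s1 : R := y1 + y2 - x1 - x2.
Definition s2 : R := y1 * y2 - x1 * x2.
Definition W (N : nat) : R := y1 ^+ N.+1 + y2 ^+ N.+1 - x1 ^+ N.+1 - x2 ^+ N.+1.

(* Internal grading: every variable has degree 2.  [ihom k p] means that p is
   homogeneous of internal degree k (the zero polynomial is homogeneous of
   every degree). *)
Definition ihom (k : int) (p : R) : Prop :=
  p = 0 \/ exists d : nat, k = (2 * d)%N%:Z /\ p \is d.-homog.

(* The exterior algebra /\F on F = R th1 (+) R th2 is free over R with basis
   b0 = 1, b1 = th1, b2 = th2, b3 = th1 th2 (indices 0..3 of 'I_4).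
   R-linear maps between such modules are encoded by 4x4 matrices M, where
   M i j is the coefficient of b_i in the image of b_j (so composition is
   the matrix product). *)
Definition oddb (i : 'I_4) : bool := (i == inord 1) || (i == inord 2).

(* matrix of delta = delta_+ + delta_-, delta_+ = (b1 th1^* + b2 th2^* ) _| (-),
   delta_- = (a1 th1 + a2 th2) /\ (-):
     delta 1        = a1 th1 + a2 th2
     delta th1      = b1 - a2 th1 th2
     delta th2      = b2 + a1 th1 th2
     delta th1 th2  = - b2 th1 + b1 th2                                    *)
Definition koszul (a1 a2 b1 b2 : R) : 'M[R]_4 :=
  \matrix_(i < 4, j < 4)
    match nat_of_ord i, nat_of_ord j with
    | 1, 0 => a1 | 2, 0 => a2
    | 0, 1 => b1 | 3, 1 => - a2
    | 0, 2 => b2 | 3, 2 => a1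
    | 1, 3 => - b2 | 2, 3 => b1
    | _, _ => 0
    end.

(* Internal degrees of the basis elements of {(a1,a2),(b1,b2)}, where the
   potential has degree 2c and deg a_i = da_i: th_i spans the shifted copy
   R{deg a_i - c}, whose generator has internal degree c - deg a_i, so that
   delta is homogeneous of degree c. *)
Definition koszul_deg (c da1 da2 : int) (i : 'I_4) : int :=
  match nat_of_ord i with
  | 0 => 0 | 1 => c - da1 | 2 => c - da2 | _ => (c - da1) + (c - da2)
  end.

Definition graded_mf_morphism (DX DY : 'M[R]_4) (degX degY : 'I_4 -> int)
    (M : 'M[R]_4) : Prop :=
  [/\ (forall i j, oddb i != oddb j -> M i j = 0),
      (forall i j, ihom (degX j - degY i) (M i j)) &
      DY *m M = M *m DX].

Definition in_ideal2 (g1 g2 f : R) : Prop := exists a b : R, f = a * g1 + b * g2.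

(* R-linear maps from a rank-2 Koszul factorisation X to the module
   R/(g1,g2) (a factorisation of 0, concentrated in even degree, with zero
   differential) are encoded by the row of lifts to R of the images of
   b0..b3.  Two such maps f, g are homotopic iff there is an odd R-linear map
   H : X -> R/(g1,g2) (so H vanishes on the even part) with
   f - g = d o H + H o delta = H o delta. *)
Definition homotopic_to_quot (g1 g2 : R) (DX : 'M[R]_4) (f g : 'rV[R]_4) : Prop :=
  exists h : 'rV[R]_4,
    (forall j, ~~ oddb j -> h 0 j = 0) /\
    (forall j, in_ideal2 g1 g2 (f 0 j - g 0 j - (h *m DX) 0 j)).

(* projection pi : {a,b} -> R/I onto /\^0 F = R, then the quotient;
   as a row of lifts: b0 |-> 1, others |-> 0 *)
Definition proj0 : 'rV[R]_4 := \row_(j < 4) (if nat_of_ord j == 0%N then 1 else 0).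

Definition Xbullet (u1 u2 : R) : 'M[R]_4 := koszul u1 u2 s1 s2.
Definition Xcirc (N : nat) : 'M[R]_4 := koszul (w1 N) (w2 N) t1 t2.

Definition gamma (u1 u2 : R) : R :=
  dy1 u1 - dy2 u1 - half * dy2 u2 * (x2 + y2) + half * dy1 u2 * (x1 + y1).

Definition pde_lhs (z : R) : R := 2 * z + dy1 z * (y1 - x1) + dy2 z * (y2 - x2).

Definition chi1 (Om : R) : 'M[R]_4 :=
  \matrix_(i < 4, j < 4)
    match nat_of_ord i, nat_of_ord j with
    | 0, 0 => 1 | 3, 0 => Om
    | 1, 1 => 1 | 2, 1 => 1
    | 1, 2 => half * (x2 + y2) | 2, 2 => half * (x1 + y1)
    | 3, 3 => half * (x1 + y1 - x2 - y2)
    | _, _ => 0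
    end.

(* The identities s1 = t1 + t2 and s2 = h2 t1 + h1 t2, with h_i = (x_i + y_i)/2,
   turn W = t1 w1 + t2 w2 = u1 s1 + u2 s2 into the Koszul syzygy
   t1 (w1 - u1 - u2 h2) + t2 (w2 - u1 - u2 h1) = 0, so there is an Omega with
   w1 = Omega t2 + u1 + u2 h2 and w2 = - Omega t1 + u1 + u2 h1.  These two
   identities are exactly what chi1 needs to commute with the differentials,
   and differentiating the first in y2 and the second in y1 gives the PDE for
   Omega.  In the variables x, t = y - x the PDE operator is 2 plus the Euler
   operator in t, hence injective, and Omega is homogeneous by Euler's identity.
   Finally pi o chi1 = pi on the nose, so the homotopy is zero. *)

From Pilot Require Import Defs.
From HB Require Import structures.
From mathcomp Require Import all_boot all_order all_algebra.
From mathcomp Require Import mpoly.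
From mathcomp Require Import ring zify.
Set Implicit Arguments. Unset Strict Implicit. Unset Printing Implicit Defensive.
Import GRing.Theory Num.Theory.
Local Open Scope ring_scope.

Section EulerOperator.
Variables (n : nat) (K : nzRingType).
Implicit Types (p q : {mpoly K[n]}) (m : 'X_{1..n}).

Lemma mcoeff_mulX p i m :
  (p * 'X_i)@_m = if (0 < m i)%N then p@_(m - U_(i)) else 0.
Proof.
case: ifP => [mi_gt0|]; last first.
  move=> mi_eq0; apply/eqP; rewrite mcoeff_eq0 (perm_mem (msuppMX _ _)).
  apply/mapP => -[m' _ Em]; move: mi_eq0; rewrite Em mnmDE mnm1E eqxx; lia.
have -> : m = (U_(i) + (m - U_(i)))%MM.
  by apply/mnmP => j; rewrite mnmDE mnmBE mnm1E; case: eqP => [<-|_] /=; lia.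
rewrite mcoeffMX; congr (_@__); apply/mnmP => j.
by rewrite mnmBE [in RHS]mnmBE mnmDE mnmBE mnm1E; case: eqP => [<-|_] /=; lia.
Qed.

Lemma mcoeff_mderiv_mulX p i m : (mderiv i p * 'X_i)@_m = p@_m *+ m i.
Proof.
rewrite mcoeff_mulX mcoeff_deriv; case: ifP => [mi_gt0|].
  2: by move/negbT; rewrite -eqn0Ngt => /eqP ->.
have -> : (m - U_(i) + U_(i))%MM = m.
  by apply/mnmP => j; rewrite mnmDE mnmBE mnm1E; case: eqP => [<-|_] /=; lia.
by rewrite mnmBE mnm1E eqxx subn1 prednK.
Qed.

Definition euler p : {mpoly K[n]} := \sum_(i < n) mderiv i p * 'X_i.

Lemma mcoeff_euler p m : (euler p)@_m = p@_m *+ mdeg m.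
Proof.
rewrite /euler raddf_sum /= mdegE -sumrMnr; apply: eq_bigr => i _.
exact: mcoeff_mderiv_mulX.
Qed.

Lemma euler_dhomog p d : p \is d.-homog -> euler p = p *+ d.
Proof.
move=> /dhomogP p_hom; apply/mpolyP => m; rewrite mcoeff_euler mcoeffMn.
have [/p_hom -> //|] := boolP (m \in msupp p).
by rewrite -mcoeff_eq0 => /eqP ->; rewrite !mul0rn.
Qed.

End EulerOperator.

Section EulerHomog.
Variables (n : nat) (K : numDomainType).
Implicit Types (p q : {mpoly K[n]}).

Lemma eulerM p q : euler (p * q) = euler p * q + p * euler q.
Proof.
rewrite /euler mulr_suml mulr_sumr -big_split; apply: eq_bigr => i _.
by rewrite mderivM mulrDl mulrAC mulrA.
Qed.

Lemma dhomog_euler p d : euler p = p *+ d -> p \is d.-homog.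
Proof.
move=> eul_p; apply/dhomogP => m; rewrite mcoeff_msupp => pm_neq0.
have /eqP := congr1 (mcoeff m) eul_p.
rewrite mcoeff_euler mcoeffMn -mulr_natr -[_ *+ d]mulr_natr.
by rewrite (inj_eq (mulfI pm_neq0)) eqr_nat => /eqP.
Qed.

Lemma dhomog_mulr_cancel p q d e :
  q != 0 -> q \is e.-homog -> p * q \is (d + e).-homog -> p \is d.-homog.
Proof.
move=> q_neq0 q_hom /euler_dhomog; rewrite eulerM (euler_dhomog q_hom).
rewrite mulrnDr mulrnAr => /addIr; rewrite -mulrnAl => /(mulIf q_neq0).
exact: dhomog_euler.
Qed.

End EulerHomog.

Section Congruence.
Variables (S : comPzRingType) (c : S).

Definition eqmod (a b : S) : Prop := exists q, a - b = q * c.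

Lemma eqmod_refl a : eqmod a a.
Proof. by exists 0; rewrite subrr mul0r. Qed.

Lemma eqmodD a b a' b' : eqmod a b -> eqmod a' b' -> eqmod (a + a') (b + b').
Proof.
move=> [q E] [q' E']; exists (q + q').
by rewrite mulrDl -E -E'; ring.
Qed.

Lemma eqmodM a b a' b' : eqmod a b -> eqmod a' b' -> eqmod (a * a') (b * b').
Proof.
move=> [q E] [q' E']; exists (a * q' + q * b').
have -> : a * a' - b * b' = a * (a' - b') + (a - b) * b' by ring.
by rewrite E E'; ring.
Qed.

Lemma eqmodX a b k : eqmod a b -> eqmod (a ^+ k) (b ^+ k).
Proof.
move=> ab; elim: k => [|k IHk]; first by rewrite !expr0; apply: eqmod_refl.
by rewrite !exprS; apply: eqmodM.
Qed.

End Congruence.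

Lemma comp_mpoly_eqmod (n k : nat) (K : comNzRingType) (c : {mpoly K[k]})
    (lp lq : n.-tuple {mpoly K[k]}) (p : {mpoly K[n]}) :
  (forall i, eqmod c (tnth lp i) (tnth lq i)) -> eqmod c (p \mPo lp) (p \mPo lq).
Proof.
move=> lpq; elim/mpolyind: p => [|a m p _ _ IHp].
  by rewrite !comp_mpoly0; apply: eqmod_refl.
rewrite !comp_mpolyD !comp_mpolyZ !comp_mpolyX -!mul_mpolyC.
apply: eqmodD => //; apply: eqmodM; first exact: eqmod_refl.
apply: (big_ind2 (eqmod c)) => [|????|i _]; first exact: eqmod_refl.
  exact: eqmodM.
exact: eqmodX.
Qed.

Lemma mulr_subr_sumXX (S : comPzRingType) (a b : S) (N : nat) :
  (a - b) * \sum_(k < N.+1) a ^+ k * b ^+ (N - k) = a ^+ N.+1 - b ^+ N.+1.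
Proof.
apply: oppr_inj; rewrite !opprB subrXX -mulNr opprB; congr (_ * _).
by apply: eq_bigr => k _; rewrite mulrC.
Qed.

Lemma mpolyX_subr_neq0 (n : nat) (K : nzRingType) (i j : 'I_n) :
  i != j -> 'X_i - 'X_j != 0 :> {mpoly K[n]}.
Proof.
move=> ij; apply/eqP => /(congr1 (mcoeff U_(i))).
rewrite mcoeffB !mcoeffXU eqxx eq_sym (negbTE ij) subr0 mcoeff0.
by apply/eqP; rewrite oner_eq0.
Qed.

Lemma mderivXU (n : nat) (K : nzRingType) (i j : 'I_n) :
  mderiv i ('X_j : {mpoly K[n]}) = (j == i)%:R.
Proof.
rewrite mderivX mnm1E; case: eqP => [->|_]; last by rewrite scale0r.
have -> : (U_(i) - U_(i))%MM = 0%MM by apply/mnmP => k; rewrite mnmBE subnn mnm0E.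
by rewrite mpolyX0 scale1r.
Qed.

Lemma mderivX_eq0 (n : nat) (K : comNzRingType) (i : 'I_n) (p : {mpoly K[n]}) k :
  mderiv i p = 0 -> mderiv i (p ^+ k) = 0.
Proof.
move=> dp0; elim: k => [|k IHk]; first by rewrite expr0 -mpolyC1 mderivC.
by rewrite exprS mderivM dp0 IHk mulr0 mul0r addr0.
Qed.

Local Notation i0 := (inord 0 : 'I_4).
Local Notation i1 := (inord 1 : 'I_4).
Local Notation i2 := (inord 2 : 'I_4).
Local Notation i3 := (inord 3 : 'I_4).
Local Notation h1 := (Defs.half * (x1 + y1)).
Local Notation h2 := (Defs.half * (x2 + y2)).

Lemma inord4_eq (a b : nat) : (a < 4)%N -> (b < 4)%N ->
  (inord a == inord b :> 'I_4) = (a == b).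
Proof. by move=> a_lt4 b_lt4; rewrite -(inj_eq val_inj) /= !inordK. Qed.

Lemma half_mul2 : Defs.half * 2 = 1.
Proof. by rewrite /Defs.half -(mpolyC_nat _ _ 2) -mpolyCM mulVf // mpolyC1. Qed.

Lemma t1_neq0 : t1 != 0.
Proof. by apply: mpolyX_subr_neq0; rewrite inord4_eq. Qed.

Lemma t2_neq0 : t2 != 0.
Proof. by apply: mpolyX_subr_neq0; rewrite inord4_eq. Qed.

Lemma W_koszul N : W N = t1 * w1 N + t2 * w2 N.
Proof. by rewrite /t1 /t2 /w1 /w2 !mulr_subr_sumXX /W; ring. Qed.

Lemma s2_koszul : s2 = h1 * t2 + h2 * t1.
Proof.
have -> : h1 * t2 + h2 * t1 = Defs.half * 2 * s2 by rewrite /s2 /t1 /t2; ring.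
by rewrite half_mul2 mul1r.
Qed.

Local Notation sub_y2x2 p := (p \mPo [tuple x1; x2; y1; x2]).

Lemma sub_y2x2_var (a : nat) : (a < 4)%N ->
  sub_y2x2 ('X_(inord a) : R) = nth 0 [:: x1; x2; y1; x2] a.
Proof. by move=> a_lt4; rewrite comp_mpolyXU /= inordK. Qed.

Lemma mpolyX_tuple : [tuple 'X_i | i < 4] = [tuple x1; x2; y1; y2] :> 4.-tuple R.
Proof.
apply: eq_from_tnth => i; rewrite tnth_map tnth_ord_tuple (tnth_nth 0).
by case: i => -[|[|[|[|//]]]] i_lt4; congr 'X__; apply: val_inj; rewrite /= inordK.
Qed.

Lemma eqmod_sub_y2x2 (p : R) : eqmod t2 p (sub_y2x2 p).
Proof.
rewrite -{1}[p]comp_mpoly_id mpolyX_tuple; apply: comp_mpoly_eqmod.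
case=> -[|[|[|[|//]]]] i_lt4; rewrite !(tnth_nth 0) /=; try exact: eqmod_refl.
by exists 1; rewrite mul1r.
Qed.

(* Substituting x2 for y2 kills t2 but not t1, and changes any polynomial only
   by a multiple of t2. *)
Lemma koszul_syzygy (F G : R) :
  t1 * F + t2 * G = 0 -> exists Om, F = Om * t2 /\ G = - (Om * t1).
Proof.
move=> syz.
have sub_t1 : sub_y2x2 t1 = t1 by rewrite /t1 /y1 /x1 comp_mpolyB !sub_y2x2_var.
have sub_t2 : sub_y2x2 t2 = 0.
  by rewrite /t2 /y2 /x2 comp_mpolyB !sub_y2x2_var ?subrr.
have subF0 : sub_y2x2 F = 0.
  have /eqP := congr1 (comp_mpoly [tuple x1; x2; y1; x2]) syz.
  rewrite comp_mpolyD !rmorphM /= sub_t1 sub_t2 mul0r addr0 comp_mpoly0.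
  by rewrite mulf_eq0 (negbTE t1_neq0) => /eqP.
have [Om FE] := eqmod_sub_y2x2 F; rewrite subF0 subr0 in FE.
exists Om; split => //; apply/eqP; rewrite -subr_eq0 opprK.
have /eqP : t2 * (G + Om * t1) = 0 by rewrite -syz FE; ring.
by rewrite mulf_eq0 (negbTE t2_neq0).
Qed.

Lemma exists_omega N (u1 u2 : R) :
  W N = u1 * s1 + u2 * s2 ->
  exists Om, w1 N = Om * t2 + u1 + u2 * h2 /\ w2 N = - (Om * t1) + u1 + u2 * h1.
Proof.
move=> WE; have /koszul_syzygy [Om [FE GE]] :
    t1 * (w1 N - u1 - u2 * h2) + t2 * (w2 N - u1 - u2 * h1) = 0.
  by rewrite -[RHS](subrr (W N)) {2}WE W_koszul s2_koszul /s1 /t1 /t2; ring.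
by exists Om; split; [rewrite -FE | rewrite -GE]; ring.
Qed.

Lemma mderiv_var (a b : nat) : (a < 4)%N -> (b < 4)%N ->
  mderiv (inord a) ('X_(inord b) : R) = (b == a)%:R.
Proof. by move=> a_lt4 b_lt4; rewrite mderivXU inord4_eq. Qed.

Lemma mderiv_half i : mderiv i Defs.half = 0.
Proof. exact: mderivC. Qed.

Lemma dy2_w1 N : dy2 (w1 N) = 0.
Proof.
rewrite /dy2 /w1 raddf_sum /=; apply: big1 => k _.
by rewrite mderivM !mderivX_eq0 ?mulr0 ?mul0r ?addr0 // /x1 /y1 mderiv_var.
Qed.

Lemma dy1_w2 N : dy1 (w2 N) = 0.
Proof.
rewrite /dy1 /w2 raddf_sum /=; apply: big1 => k _.
by rewrite mderivM !mderivX_eq0 ?mulr0 ?mul0r ?addr0 // /x2 /y2 mderiv_var.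
Qed.

Lemma pde_lhs_omega N (u1 u2 Om : R) :
  w1 N = Om * t2 + u1 + u2 * h2 -> w2 N = - (Om * t1) + u1 + u2 * h1 ->
  pde_lhs Om = gamma u1 u2.
Proof.
move=> w1E w2E.
have dy2E : dy2 Om * t2 + Om + dy2 u1 + dy2 u2 * h2 + u2 * Defs.half = 0.
  have := congr1 dy2 w1E; rewrite dy2_w1 /dy2 /t2.
  rewrite !(mderivD, mderivB, mderivN, mderivM) mderiv_half /x2 /y2.
  rewrite !mderiv_var //= => ->.
  ring.
have dy1E : dy1 u1 + dy1 u2 * h1 + u2 * Defs.half - dy1 Om * t1 - Om = 0.
  have := congr1 dy1 w2E; rewrite dy1_w2 /dy1 /t1.
  rewrite !(mderivD, mderivB, mderivN, mderivM) mderiv_half /x1 /y1.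
  rewrite !mderiv_var //= => ->.
  ring.
apply/eqP; rewrite -subr_eq0 -[0](subrr 0) -{1}dy2E -dy1E.
by apply/eqP; rewrite /pde_lhs /gamma /t1 /t2; ring.
Qed.

Definition ydeg (m : 'X_{1..4}) : nat := (m i2 + m i3)%N.

Lemma ydeg_le_mdeg m : (ydeg m <= mdeg m)%N.
Proof.
rewrite /ydeg mdegE (bigD1 i2) //= (bigD1 i3) /=; last by rewrite inord4_eq.
by rewrite addnA leq_addr.
Qed.

Lemma ydeg_shift m (a b : nat) : (a < 2)%N -> (2 <= b < 4)%N ->
  ydeg (m - U_(inord a) + U_(inord b))%MM = (ydeg m).+1.
Proof.
move=> a_lt2 /andP[b_ge2 b_lt4].
by rewrite /ydeg !(mnmDE, mnmBE, mnm1E) !inord4_eq //=;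
  case: b b_ge2 b_lt4 => [|[|[|[|]]]]; lia.
Qed.

Lemma mcoeff_pde_lhs (z : R) m :
  (pde_lhs z)@_m = z@_m *+ (ydeg m).+2
    - (if (0 < m i0)%N then z@_(m - U_(i0) + U_(i2)) *+ (m i2).+1 else 0)
    - (if (0 < m i1)%N then z@_(m - U_(i1) + U_(i3)) *+ (m i3).+1 else 0).
Proof.
have -> : pde_lhs z = z *+ 2 + mderiv i2 z * 'X_i2 + mderiv i3 z * 'X_i3
    - mderiv i2 z * 'X_i0 - mderiv i3 z * 'X_i1.
  by rewrite /pde_lhs /dy1 /dy2 /x1 /x2 /y1 /y2; ring.
rewrite !(mcoeffD, mcoeffN) !mcoeff_mderiv_mulX !mcoeff_mulX !mcoeff_deriv.
by rewrite !mnmBE !mnm1E !inord4_eq //= !subn0 /ydeg; ring.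
Qed.

(* Shifting x-degree to y-degree, the coefficient of m in pde_lhs z involves z
   only at m and at monomials of larger y-degree: induct downwards on it. *)
Lemma pde_lhs_eq0 (z : R) : pde_lhs z = 0 -> z = 0.
Proof.
move=> pde0.
suff coef0 k m : (msize z <= ydeg m + k)%N -> z@_m = 0.
  by apply/mpolyP => m; rewrite mcoeff0 (coef0 (msize z)) // leq_addl.
elim: k m => [|k IHk] m size_le.
  apply/eqP; rewrite mcoeff_eq0; apply: msize_mdeg_ge.
  by apply: leq_trans size_le _; rewrite addn0 ydeg_le_mdeg.
have shift0 (a b : nat) : (a < 2)%N -> (2 <= b < 4)%N ->
    z@_(m - U_(inord a) + U_(inord b)) = 0.
  by move=> a_lt2 b_bound; apply: IHk; rewrite ydeg_shift // addSn -addnS.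
have := congr1 (mcoeff m) pde0.
rewrite mcoeff_pde_lhs mcoeff0 !shift0 // !mul0rn !if_same !subr0.
by move/eqP; rewrite mulrn_eq0 => /eqP.
Qed.

Lemma pde_lhs_inj : injective pde_lhs.
Proof.
move=> z z' eq_pde; apply/eqP; rewrite -subr_eq0; apply/eqP/pde_lhs_eq0.
have -> : pde_lhs (z - z') = pde_lhs z - pde_lhs z'.
  by rewrite /pde_lhs /dy1 /dy2 !mderivB; ring.
by rewrite eq_pde subrr.
Qed.

Lemma mpolyX_dhomog (n : nat) (K : nzRingType) (i : 'I_n) :
  ('X_i : {mpoly K[n]}) \is 1.-homog.
Proof. by rewrite dhomogX; apply/eqP; apply: mdeg1. Qed.

Lemma half_dhomog (p : R) d : p \is d.-homog -> Defs.half * p \is d.-homog.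
Proof. by rewrite /Defs.half mul_mpolyC; apply: dhomogZ. Qed.

Lemma t2_dhomog : t2 \is 1.-homog.
Proof. by apply: rpredB; apply: mpolyX_dhomog. Qed.

Lemma h_dhomog (a b : nat) :
  Defs.half * ('X_(inord a) + 'X_(inord b)) \is 1.-homog.
Proof. by apply/half_dhomog/rpredD; apply: mpolyX_dhomog. Qed.

Lemma w1_dhomog N : w1 N \is N.-homog.
Proof.
apply: rpred_sum => k _.
have := dhomogM (dhomogMn k (mpolyX_dhomog rat i2))
                (dhomogMn (N - k) (mpolyX_dhomog rat i0)).
by rewrite !mul1n subnKC // -ltnS.
Qed.

Lemma omega_dhomog N (u1 u2 Om : R) : (0 < N)%N ->
  u1 \is N.-homog -> u2 \is N.-1.-homog ->
  w1 N = Om * t2 + u1 + u2 * h2 -> Om \is N.-1.-homog.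
Proof.
move=> N_gt0 u1_hom u2_hom w1E.
apply: (dhomog_mulr_cancel t2_neq0 t2_dhomog); rewrite addn1 prednK //.
have -> : Om * t2 = w1 N - u1 - u2 * h2 by rewrite w1E; ring.
rewrite rpredB ?rpredB ?w1_dhomog //.
by have := dhomogM u2_hom (h_dhomog 1 3); rewrite addn1 prednK.
Qed.

Lemma ihom_dhomog d (k : int) (p : R) :
  k = (2 * d)%N%:Z -> ihom k p -> p \is d.-homog.
Proof.
move=> ->[->|[e [/eqP]]]; first exact: rpred0.
by rewrite eqz_nat eqn_mul2l /= => /eqP ->.
Qed.

Lemma dhomog_ihom d (k : int) (p : R) :
  k = (2 * d)%N%:Z -> p \is d.-homog -> ihom k p.
Proof. by move=> -> p_hom; right; exists d. Qed.

Lemma oddbE (i : 'I_4) : Defs.oddb i = (val i == 1%N) || (val i == 2%N).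
Proof. by rewrite /Defs.oddb -!(inj_eq val_inj) /= !inordK. Qed.

Lemma chi1_comm N (u1 u2 Om : R) :
  w1 N = Om * t2 + u1 + u2 * h2 -> w2 N = - (Om * t1) + u1 + u2 * h1 ->
  Xcirc N *m chi1 Om = chi1 Om *m Xbullet u1 u2.
Proof.
move=> w1E w2E; apply/matrixP => i j.
rewrite /Xcirc /Xbullet /koszul /chi1 !mxE !big_ord_recr !big_ord0 /= !mxE /=.
rewrite s2_koszul w1E w2E /s1 /t1 /t2.
by case: i => [[|[|[|[|?]]]] ?] //; case: j => [[|[|[|[|?]]]] ?] //=; ring.
Qed.

Lemma chi1_graded_mf_morphism N (u1 u2 Om : R) : (0 < N)%N ->
  Om \is N.-1.-homog ->
  w1 N = Om * t2 + u1 + u2 * h2 -> w2 N = - (Om * t1) + u1 + u2 * h1 ->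
  graded_mf_morphism (Xbullet u1 u2) (Xcirc N)
    (koszul_deg (N%:Z + 1) (2 * N%:Z) (2 * N%:Z - 2))
    (koszul_deg (N%:Z + 1) (2 * N%:Z) (2 * N%:Z))
    (chi1 Om).
Proof.
move=> N_gt0 Om_hom w1E w2E; split; last exact: chi1_comm.
- move=> i j; rewrite !oddbE /chi1 mxE.
  by case: i => [[|[|[|[|?]]]] ?] //; case: j => [[|[|[|[|?]]]] ?].
- move=> i j; rewrite /chi1 mxE.
  case: i => [[|[|[|[|?]]]] ?] //; case: j => [[|[|[|[|?]]]] ?] //=;
    rewrite /koszul_deg /=; try by left.
  all: first [ apply: (dhomog_ihom (d := 0)); [lia | exact: dhomog1]
             | apply: (dhomog_ihom (d := 1)); [lia | exact: h_dhomog]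
             | apply: (dhomog_ihom (d := N.-1)); [lia | exact: Om_hom]
             | apply: (dhomog_ihom (d := 1)); [lia | ] ].
  by apply/half_dhomog/rpredB; [apply/rpredB; [apply/rpredD|]|];
    apply: mpolyX_dhomog.
Qed.

Lemma proj0_chi1 (Om : R) : proj0 *m chi1 Om = proj0.
Proof.
apply/rowP => j; rewrite !mxE !big_ord_recr big_ord0 /= !mxE /=.
by case: j => [[|[|[|[|?]]]] ?] //=; ring.
Qed.

Lemma homotopic_to_quot_refl (g1 g2 : R) (DX : 'M[R]_4) (f : 'rV[R]_4) :
  homotopic_to_quot g1 g2 DX f f.
Proof.
exists 0; split=> [j _|j]; first by rewrite mxE.
by exists 0, 0; rewrite mul0mx mxE subrr subr0; ring.
Qed.

Theorem lemmaA4 (N : nat) (u1 u2 : R) :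
  (0 < N)%N ->
  ihom (2 * N%:Z) u1 -> ihom (2 * N%:Z - 2) u2 ->
  W N = u1 * s1 + u2 * s2 ->
  swapxy u1 = u1 -> swapxy u2 = u2 ->
  exists Om : R,
    [/\ pde_lhs Om = gamma u1 u2,
        (forall z : R, pde_lhs z = gamma u1 u2 -> z = Om),
        graded_mf_morphism (Xbullet u1 u2) (Xcirc N)
          (koszul_deg (N%:Z + 1) (2 * N%:Z) (2 * N%:Z - 2))
          (koszul_deg (N%:Z + 1) (2 * N%:Z) (2 * N%:Z))
          (chi1 Om) &
        homotopic_to_quot t1 t2 (Xbullet u1 u2) (proj0 *m chi1 Om) proj0].
Proof.
move=> N_gt0 u1_ihom u2_ihom WE _ _.
have u1_hom : u1 \is N.-homog by apply: ihom_dhomog u1_ihom; lia.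
have u2_hom : u2 \is N.-1.-homog by apply: ihom_dhomog u2_ihom; lia.
have [Om [w1E w2E]] := exists_omega WE.
have pde_Om := pde_lhs_omega w1E w2E.
have Om_hom := omega_dhomog N_gt0 u1_hom u2_hom w1E.
exists Om; split => //.
- by move=> z pde_z; apply: pde_lhs_inj; rewrite pde_z.
- exact: chi1_graded_mf_morphism N_gt0 Om_hom w1E w2E.
- by rewrite proj0_chi1; apply: homotopic_to_quot_refl.
Qed.
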